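(* Let $d,r$ be positive integers, let $n=dr$, and let $\alpha\in\mathcal S_n$ have cycle structure $d^r$ (i.e. $r$ disjoint cycles each of length $d$). Then $(\alpha,\alpha,\alpha;(12))\in\mathrm{Par}(n)$ if and only if $d\not\equiv2\pmod 4$.
   Context: A Latin square of order $n$ is an $n\times n$ array with rows, columns and symbols indexed by $[n]$, each symbol occurring once in each row and each column, with triple set $O(L)$. Permutations act on the right. A paratopism $(\alpha,\beta,\gamma;(12))$ maps $L$ to $L^\sigma$ with triple set $\{(y\beta,x\alpha,z\gamma):(x,y,z)\in O(L)\}$; it is an autoparatopism of $L$ if $L^\sigma=L$. $\mathrm{Par}(n)$ is the set of paratopisms that are autoparatopisms of at least one Latin square of order $n$. *)

From mathcomp Require Import all_boot all_fingroup.
Set Implicit Arguments. Unset Strict Implicit. Unset Printing Implicit Defensive.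

(* A Latin square of order n: L x y is the symbol in row x, column y,
   i.e. O(L) = {(x, y, L x y)}.  Each symbol occurs exactly once in each
   row and exactly once in each column. *)
Definition latin_square (n : nat) (L : 'I_n -> 'I_n -> 'I_n) : Prop :=
  (forall x z : 'I_n, exists! y : 'I_n, L x y = z) /\
  (forall y z : 'I_n, exists! x : 'I_n, L x y = z).

(* The paratopism (a, b, c; (12)) maps L to L^s with triple set
   {(y b, x a, z c) : (x,y,z) in O(L)}.  Permutations act on the right, so
   "x a" is the image a x.  L^s is again a function of (row, col); it equals
   L iff every image triple (b y, a x, c (L x y)) belongs to O(L). *)
Definition autoparatopism12 (n : nat) (a b c : {perm 'I_n})
    (L : 'I_n -> 'I_n -> 'I_n) : Prop :=
  forall x y : 'I_n, L (b y) (a x) = c (L x y).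

Definition in_Par12 (n : nat) (a b c : {perm 'I_n}) : Prop :=
  exists L : 'I_n -> 'I_n -> 'I_n, latin_square L /\ autoparatopism12 a b c L.

Definition cycle_structure_uniform (m d : nat) (a : {perm 'I_m}) : Prop :=
  forall x : 'I_m, #|porbit a x| = d.

From mathcomp Require Import all_boot all_fingroup ssralg zmodp.
From mathcomp Require Import zify.
Set Implicit Arguments. Unset Strict Implicit. Unset Printing Implicit Defensive.
Import GRing.Theory.

(* If d = 2m with m odd, applying the autoparatopism m times maps the cell
   (x, a^m x) to itself, so a^m fixes the symbol in that cell; this is impossible
   because every cycle of a has length d > m.
   Conversely, labelling the points of the j-th cycle of a by i in Z_d turns a into
   (i, j) |-> (i + 1, j).  The direct product of a commutative Latin square on the
   cycle labels with a Latin square N on Z_d such that N (y + 1) (x + 1) = N x y + 1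
   is then invariant under (a, a, a; (12)).  For odd d, N x y = (x + y) / 2 works;
   for 4 | d, N x y = x + F_(x mod 2) (y - x) works for a suitable pair of
   permutations F_0, F_1 of Z_d. *)

Section PermOrbits.
Variables (T : finType) (a : {perm T}).

Lemma iter_porbit_mod x m : iter (m %% #|porbit a x|) a x = iter m a x.
Proof.
rewrite {2}(divn_eq m #|porbit a x|) addnC iterD; congr (iter _ a _); apply: esym.
by elim: (m %/ _) => [//|q IHq]; rewrite mulSn iterD IHq iter_porbit.
Qed.

Lemma iter_porbit_inj x i j : i < #|porbit a x| -> j < #|porbit a x| ->
  iter i a x = iter j a x -> i = j.
Proof.
move=> lti ltj eq_ij; have := nth_uniq x _ _ (uniq_traject_porbit a x).
rewrite size_traject => /(_ i j lti ltj).
by rewrite !nth_traject // eq_ij eqxx => /esym/eqP.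
Qed.

Lemma porbit_iterP x y :
  reflect (exists2 i, i < #|porbit a x| & y = iter i a x) (y \in porbit a x).
Proof.
apply: (iffP (porbitP a x y)) => [[i ->]|[i _ ->]]; last by exists i; rewrite permX.
exists (i %% #|porbit a x|); first by rewrite ltn_mod lt0n card_porbit_neq0.
by rewrite permX iter_porbit_mod.
Qed.

End PermOrbits.

Section AutoparatopismIterates.
Variables (n : nat) (a : {perm 'I_n}) (L : 'I_n -> 'I_n -> 'I_n).
Hypothesis autoL : autoparatopism12 a a a L.

Lemma autoparatopism12_iter_double j x y :
  L (iter j.*2 a x) (iter j.*2 a y) = iter j.*2 a (L x y).
Proof. by elim: j x y => [//|j IHj] x y; rewrite doubleS /= !autoL IHj. Qed.

Lemma autoparatopism12_iter_odd j x y :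
  L (iter j.*2.+1 a y) (iter j.*2.+1 a x) = iter j.*2.+1 a (L x y).
Proof. by rewrite /= autoL autoparatopism12_iter_double. Qed.

Lemma autoparatopism12_iter_fixed m x : odd m -> iter m.*2 a x = x ->
  iter m a (L x (iter m a x)) = L x (iter m a x).
Proof.
move=> odd_m; rewrite -[m]odd_double_half odd_m add1n => period.
by rewrite -autoparatopism12_iter_odd -iterD addnn period.
Qed.

End AutoparatopismIterates.

Lemma in_Par12_uniform_mod4_neq2 n d (a : {perm 'I_n}) : 0 < n ->
  cycle_structure_uniform d a -> in_Par12 a a a -> d %% 4 != 2.
Proof.
move=> n_gt0 card_porbit_a [L [_ autoL]]; apply/negP => d_mod4.
pose x : 'I_n := Ordinal n_gt0; pose m := d./2.
have odd_m : odd m by lia.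
have period : iter m.*2 a x = x.
  by rewrite (_ : m.*2 = d); [rewrite -(card_porbit_a x) iter_porbit | lia].
have := autoparatopism12_iter_fixed autoL odd_m period.
set z := L x _ => fixed.
suff : m = 0 by move=> m0; rewrite m0 in odd_m.
by apply: (@iter_porbit_inj _ a z m 0 _ _ fixed); rewrite card_porbit_a; lia.
Qed.

Section OrbitCoordinates.
Variables (T : finType) (a : {perm T}) (d' : nat).
Hypothesis card_porbit_a : forall x, #|porbit a x| = d'.+1.

Lemma porbits_inhabited O : O \in porbits a -> exists x, x \in O.
Proof. by case/imsetP=> x _ ->; exists x; apply: porbit_id. Qed.

Definition orbit_rep (j : 'I_#|porbits a|) : T :=
  xchoose (porbits_inhabited (enum_valP j)).

Lemma porbit_orbit_rep j : porbit a (orbit_rep j) = enum_val j.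
Proof.
have rep_in : orbit_rep j \in enum_val j by apply: xchooseP.
have /imsetP[x _ Ox] := enum_valP j.
by apply/eqP; rewrite Ox eq_porbit_mem -Ox.
Qed.

Definition orbit_coord (p : 'I_d'.+1 * 'I_#|porbits a|) : T :=
  iter p.1 a (orbit_rep p.2).

Lemma orbit_coord_inj : injective orbit_coord.
Proof.
move=> [i j] [i' j']; rewrite /orbit_coord /= => eq_coord.
have eq_j : j = j'.
  apply: enum_val_inj; rewrite -!porbit_orbit_rep.
  rewrite -(porbit_perm a i (orbit_rep j)) -(porbit_perm a i' (orbit_rep j')).
  by rewrite !permX eq_coord.
subst j'; congr pair; apply: val_inj.
by apply: (@iter_porbit_inj _ a (orbit_rep j)); rewrite ?card_porbit_a ?ltn_ord.
Qed.

Lemma orbit_coord_onto u : u \in codom orbit_coord.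
Proof.
have u_orbit : porbit a u \in porbits a by apply: imset_f.
pose j := enum_rank_in u_orbit (porbit a u).
have : u \in porbit a (orbit_rep j).
  by rewrite porbit_orbit_rep enum_rankK_in // porbit_id.
case/porbit_iterP=> i; rewrite card_porbit_a => lt_i_d ->.
exact: (codom_f orbit_coord (Ordinal lt_i_d, j)).
Qed.

Lemma orbit_coord_bij : bijective orbit_coord.
Proof.
exists (fun u => iinv (orbit_coord_onto u)) => [p|u]; last exact: f_iinv.
exact: (iinv_f orbit_coord_inj).
Qed.

Lemma orbit_coord_shift i j :
  a (orbit_coord (i, j)) = orbit_coord ((i + Zp1)%R, j).
Proof.
rewrite /orbit_coord /= -iterS -(iter_porbit_mod _ _ i.+1) card_porbit_a.
by rewrite modnDmr addn1.
Qed.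

End OrbitCoordinates.

Lemma latin_squareP n (L : 'I_n -> 'I_n -> 'I_n) :
  latin_square L <-> (forall x, injective (L x)) /\ (forall y, injective (L^~ y)).
Proof.
split=> [[rowL colL] | [rowI colI]].
  split=> [x y1 y2 | y x1 x2] eqL.
    have [y [_ uniq_y]] := rowL x (L x y1).
    by rewrite -(uniq_y y1) // -(uniq_y y2).
  have [x [_ uniq_x]] := colL y (L x1 y).
  by rewrite -(uniq_x x1) // -(uniq_x x2).
split=> [x z | y z].
  have [f fK Kf] := injF_bij (rowI x).
  by exists (f z); split=> [|y <-]; rewrite ?Kf ?fK.
have [f fK Kf] := injF_bij (colI y).
by exists (f z); split=> [|x <-]; rewrite ?Kf ?fK.
Qed.

Lemma Zp_addI k (i : 'I_k) : injective (Zp_add i).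
Proof. by case: k i => [[]//|k] i; apply: addrI. Qed.

Definition cycle_shift d' : {perm 'I_d'.+1} := perm (@addIr _ Zp1).

Lemma cycle_shiftE d' (i : 'I_d'.+1) : cycle_shift d' i = (i + Zp1)%R.
Proof. by rewrite permE. Qed.

Lemma in_Par12_uniform_of_cycle_shift n d' (a : {perm 'I_n}) :
  cycle_structure_uniform d'.+1 a ->
  in_Par12 (cycle_shift d') (cycle_shift d') (cycle_shift d') -> in_Par12 a a a.
Proof.
move=> card_porbit_a [N [/latin_squareP[rowN colN] autoN]].
have [f eK fK] := orbit_coord_bij card_porbit_a.
have f_shift u : f (a u) = (cycle_shift d' (f u).1, (f u).2).
  apply: (can_inj eK); rewrite fK cycle_shiftE -(orbit_coord_shift card_porbit_a).
  by rewrite -surjective_pairing fK.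
exists (fun u v => orbit_coord (N (f u).1 (f v).1, Zp_add (f u).2 (f v).2)); split.
  apply/latin_squareP.
  split=> [u v1 v2 | v u1 u2] /(can_inj eK)/pair_equal_spec[eqN eqS].
    apply: (can_inj fK); rewrite [f v1]surjective_pairing [f v2]surjective_pairing.
    by rewrite (rowN _ _ _ eqN) (Zp_addI eqS).
  rewrite ![Zp_add _ (f v).2]Zp_addC in eqS.
  apply: (can_inj fK); rewrite [f u1]surjective_pairing [f u2]surjective_pairing.
  by rewrite (colN _ _ _ eqN) (Zp_addI eqS).
move=> u v; rewrite !f_shift /= autoN Zp_addC.
by rewrite (orbit_coord_shift card_porbit_a) cycle_shiftE.
Qed.

Section ZpValues.
Variable d' : nat.
Local Notation d := d'.+1.

Lemma val_addZp1 (x : 'I_d) : nat_of_ord (x + Zp1)%R = if x.+1 < d then x.+1 else 0.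
Proof.
rewrite /= modnDmr addn1; case: ifP => [/modn_small //|not_lt].
by rewrite (_ : x.+1 = d) ?modnn //; have := ltn_ord x; lia.
Qed.

Lemma val_subZp (x y : 'I_d) :
  nat_of_ord (y - x)%R = if x <= y then y - x else d - x + y.
Proof.
have := ltn_ord x; have := ltn_ord y; rewrite /= /Zp_add /Zp_opp /=.
case: (posnP x) => [-> | x_gt0] *; first by rewrite subn0 modnn addn0 modn_small ?subn0.
rewrite (modn_small (_ : d - x < d)); last lia.
case: ifP => le_xy; last by rewrite addnC modn_small; lia.
by rewrite (_ : y + (d - x) = y - x + d) ?modnDr ?modn_small; lia.
Qed.

Lemma val_oppZp (x : 'I_d) : nat_of_ord (- x)%R = if x == 0 :> nat then 0 else d - x.
Proof.
rewrite /=; case: (posnP x) => [-> | x_gt0]; first by rewrite subn0 modnn.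
by rewrite modn_small; have := ltn_ord x; lia.
Qed.

Lemma odd_subZp (x y : 'I_d) : ~~ odd d -> odd (y - x)%R = odd x (+) odd y.
Proof.
rewrite val_subZp => even_d; have := ltn_ord x; have := ltn_ord y.
by case: (boolP (odd x)); case: (boolP (odd y)); case: ifP => /=; lia.
Qed.

Lemma odd_addZp1 (x : 'I_d) : ~~ odd d -> odd (x + Zp1)%R = ~~ odd x.
Proof.
rewrite val_addZp1 => even_d; have := ltn_ord x.
by case: (boolP (odd x)); case: ifP => /=; lia.
Qed.

End ZpValues.

Lemma in_Par12_cycle_shift_square d' (N : 'I_d'.+1 -> 'I_d'.+1 -> 'I_d'.+1) :
  (forall x, injective (N x)) -> (forall y, injective (N^~ y)) ->
  (forall x y, N (y + Zp1)%R (x + Zp1)%R = (N x y + Zp1)%R) ->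
  in_Par12 (cycle_shift d') (cycle_shift d') (cycle_shift d').
Proof.
move=> rowN colN autoN; exists N; split; first exact/latin_squareP.
by move=> x y; rewrite !cycle_shiftE.
Qed.

Ltac case_ifs := repeat match goal with
  | |- context [if ?b then _ else _] =>
      lazymatch b with context [if _ then _ else _] => fail | _ =>
        case: (boolP b) => ?; cbv beta iota end
  end.

(* Division by 2 in Z_d, for odd d. *)
Definition half_mod (d w : nat) := if odd w then (w + d)./2 else w./2.

Section OddOrder.
Variable d' : nat.
Local Notation d := d'.+1.
Hypothesis odd_d : odd d.
Local Open Scope ring_scope.

Definition halfZp (w : 'I_d) : 'I_d := inZp (half_mod d w).

Lemma val_halfZp w : nat_of_ord (halfZp w) = half_mod d w.
Proof. by rewrite /= modn_small // /half_mod; have := ltn_ord w; case: ifP; lia. Qed.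

Lemma halfZp_inj : injective halfZp.
Proof.
move=> w1 w2 /(congr1 (@nat_of_ord d)); rewrite !val_halfZp /half_mod => eq_half.
by apply: ord_inj; move: eq_half (ltn_ord w1) (ltn_ord w2); case_ifs; lia.
Qed.

Lemma halfZp_add2 w : halfZp (w + Zp1 + Zp1) = halfZp w + Zp1.
Proof.
apply: ord_inj; rewrite val_halfZp !val_addZp1 val_halfZp /half_mod.
by have := ltn_ord w; case_ifs; lia.
Qed.

Lemma in_Par12_cycle_shift_odd :
  in_Par12 (cycle_shift d') (cycle_shift d') (cycle_shift d').
Proof.
apply: (@in_Par12_cycle_shift_square _ (fun x y => halfZp (x + y))).
- by move=> x y1 y2 /halfZp_inj/addrI.
- by move=> y x1 x2 /halfZp_inj/addIr.
- by move=> x y; rewrite addrACA addrA [y + x]addrC halfZp_add2.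
Qed.

End OddOrder.

(* The permutations F_0, F_1 of Z_4k: the square x + F_(x mod 2) (y - x) has
   Latin rows by [orthZp_inj], Latin columns by [orthZp_subI], and the required
   symmetry by [orthZp_opp]. *)
Definition orth (k : nat) (e : bool) (s : nat) : nat :=
  if e then
    if odd s then (if s < 2 * k then 2 * s else 4 * k - s)
    else if s == 0 then 0 else if s <= 2 * k then 4 * k + 1 - s else 2 * s - 4 * k
  else if s < 2 * k then (if odd s then 2 * s + 1 else if s == 0 then 0 else 4 * k - s)
    else if odd s then 4 * k + 1 - s else 2 * s + 1 - 4 * k.

Section Dvd4Order.
Variables (d' k : nat).
Local Notation d := d'.+1.
Hypothesis d_eq : d = 4 * k.
Local Open Scope ring_scope.

Definition orthZp (e : bool) (s : 'I_d) : 'I_d := inZp (orth k e s).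

Lemma val_orthZp e s : nat_of_ord (orthZp e s) = orth k e s.
Proof. by rewrite /= modn_small // /orth; have := ltn_ord s; case_ifs; lia. Qed.

Lemma orthZp_inj e : injective (orthZp e).
Proof.
move=> s1 s2 /(congr1 (@nat_of_ord d)); rewrite !val_orthZp /orth => eq_orth.
by apply: ord_inj; move: eq_orth (ltn_ord s1) (ltn_ord s2); case_ifs; lia.
Qed.

Lemma orthZp_subI p : injective (fun s : 'I_d => orthZp (p (+) odd s) s - s).
Proof.
move=> s1 s2 /(congr1 (@nat_of_ord d)); rewrite !val_subZp !val_orthZp /orth.
move=> eq_orth; apply: ord_inj; move: eq_orth (ltn_ord s1) (ltn_ord s2).
by case: p; case_ifs; lia.
Qed.

Lemma orthZp_opp e (s : 'I_d) : orthZp (~~ (e (+) odd s)) (- s) = orthZp e s - s.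
Proof.
apply: ord_inj; rewrite val_subZp !val_orthZp val_oppZp /orth.
by have := ltn_ord s; case: e; case_ifs; lia.
Qed.

Lemma in_Par12_cycle_shift_dvd4 :
  in_Par12 (cycle_shift d') (cycle_shift d') (cycle_shift d').
Proof.
have even_d : ~~ odd d by rewrite d_eq; lia.
have odd_y (x y : 'I_d) : odd y = odd x (+) odd (nat_of_ord (y - x)).
  by rewrite odd_subZp // addbA addbb.
have col_form (x y : 'I_d) : x + orthZp (odd x) (y - x) =
    y + (orthZp (odd y (+) odd (nat_of_ord (y - x))) (y - x) - (y - x)).
  by rewrite (odd_y x y) addbK opprB addrCA subrKC addrC.
apply: (@in_Par12_cycle_shift_square _ (fun x y => x + orthZp (odd x) (y - x))).
- by move=> x y1 y2 /addrI/orthZp_inj/addIr.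
- move=> y x1 x2; rewrite !col_form => /addrI/(@orthZp_subI (odd y)).
  by move/addrI/oppr_inj.
- move=> x y; have -> : (x + Zp1) - (y + Zp1) = - (y - x).
    by rewrite opprD addrACA subrr addr0 opprB.
  rewrite odd_addZp1 // (odd_y x y) orthZp_opp.
  by rewrite opprB addrAC addrCA subrKC [_ + x]addrC.
Qed.

End Dvd4Order.

Theorem corollary4p12 (d r : nat) (hd : 0 < d) (hr : 0 < r)
    (a : {perm 'I_(d * r)}) (ha : cycle_structure_uniform d a) :
  in_Par12 a a a <-> d %% 4 <> 2.
Proof.
case: d hd a ha => [//|d'] _ a card_porbit_a.
split=> [Par_a | not_mod4].
  apply/eqP; apply: (in_Par12_uniform_mod4_neq2 _ card_porbit_a Par_a).
  by rewrite muln_gt0 hr.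
apply: (in_Par12_uniform_of_cycle_shift card_porbit_a).
have [odd_d | even_d] := boolP (odd d'.+1); first exact: in_Par12_cycle_shift_odd odd_d.
by apply: (@in_Par12_cycle_shift_dvd4 _ (d'.+1 %/ 4)); lia.
Qed.
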